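(* Let $G,H$ be real Hilbert spaces, let $D\subset G$ be bounded, let $x\in D$, and let $K_F,L_F,\lambda_F,L_f,\lambda_f,K_f\ge0$ be constants with $\lambda_F\le K_F^2$ and $\lambda_f\le L_f$. Let $F:G\to H$ be $K_F$-BJ, $L_F$-LJ and $\lambda_F$-UC on $D$, let $f:H\to\mathbb{R}$ be $L_f$-LG and $\lambda_f$-PL on $F(D)$, and suppose $\|\nabla f(F(x))\|\le K_f$. Let $L=K_F^2L_f+K_fL_F$, $\lambda=\lambda_F\lambda_f$, $\alpha\in(0,\tfrac2L)$, $q=1+L\alpha^2\lambda-2\alpha\lambda$, and $x^\alpha=x-\alpha\nabla(f\circ F)(x)$. If $[x,x^\alpha]\subset D$, then \[ (f\circ F)(x^\alpha)-f_*\le q\bigl((f\circ F)(x)-f_*\bigr), \] where $f_*=\inf_{h\in H}f(h)$.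
   Context: For $F:G\to H$ between Hilbert spaces, $\partial F(x)$ is the Fréchet derivative and $\partial F(x)^*$ its adjoint; $\nabla f$ denotes gradients of real-valued functions; $[x,y]=\{(1-t)x+ty:t\in[0,1]\}$. For $F$ differentiable on $D$: $K$-BJ on $D$ means $\|\partial F(x)\|\le K$ for $x\in D$; $L$-LJ on $D$ means $\|\partial F(x)-\partial F(y)\|\le L\|x-y\|$ for $x,y\in D$; $\lambda$-UC on $D$ ($\lambda>0$) means $\langle y,\partial F(x)\partial F(x)^*y\rangle\ge\lambda\|y\|^2$ for all $y\in H$, $x\in D$. For $f:H\to\mathbb{R}$ differentiable on $E$: $L$-LG on $E$ means $\|\nabla f(u)-\nabla f(v)\|\le L\|u-v\|$ for $u,v\in E$; if $f$ is bounded below on $H$ with $f_*=\inf_Hf\in\mathbb{R}$, $\lambda$-PL on $E$ ($\lambda>0$) means $\tfrac12\|\nabla f(u)\|^2\ge\lambda(f(u)-f_* )$ for $u\in E$. *)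

From HB Require Import structures.
From mathcomp Require Import all_boot all_order all_algebra.
From mathcomp Require Import all_classical all_reals all_analysis.
Set Implicit Arguments. Unset Strict Implicit. Unset Printing Implicit Defensive.
Import Order.TTheory GRing.Theory Num.Theory.
Import numFieldNormedType.Exports.
Local Open Scope classical_set_scope.
Local Open Scope ring_scope.

(* A real Hilbert space is a completeNormedModType R equipped with such an
   inner product (norm induced by the inner product, complete). *)
Record inner_product (R : realType) (V : normedModType R) := InnerProduct {
  ip :> V -> V -> R;
  ip_sym : forall u v, ip u v = ip v u;
  ip_linl : forall (a : R) u v w, ip (a *: u + v) w = a * ip u w + ip v w;
  ip_norm : forall u, ip u u = `|u| ^+ 2 }.

Section Defs.
Variable R : realType.

Definition gradient (V : normedModType R) (iV : inner_product V)
  (f : V -> R) (u : V) : V :=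
  xget 0 [set g | forall h, 'd f u h = iV g h].

Definition adjoint (G H : normedModType R) (iG : inner_product G)
  (iH : inner_product H) (A : G -> H) (y : H) : G :=
  xget 0 [set z | forall u, iH (A u) y = iG u z].

Definition opnorm_le (G H : normedModType R) (A : G -> H) (K : R) :=
  forall v, `|A v| <= K * `|v|.

Definition differentiable_on (G H : normedModType R) (F : G -> H) (D : set G) :=
  forall x, D x -> differentiable F x.

Definition BJ (G H : normedModType R) (F : G -> H) (D : set G) (K : R) :=
  differentiable_on F D /\ forall x, D x -> opnorm_le ('d F x) K.

Definition LJ (G H : normedModType R) (F : G -> H) (D : set G) (L : R) :=
  differentiable_on F D /\
  forall x y, D x -> D y ->
    opnorm_le (fun v => 'd F x v - 'd F y v) (L * `|x - y|).

Definition UC (G H : normedModType R) (iG : inner_product G)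
  (iH : inner_product H) (F : G -> H) (D : set G) (lam : R) :=
  0 < lam /\ differentiable_on F D /\
  forall x, D x -> forall y : H,
    iH y ('d F x (adjoint iG iH ('d F x) y)) >= lam * `|y| ^+ 2.

Definition LG (V : normedModType R) (iV : inner_product V) (f : V -> R)
  (E : set V) (L : R) :=
  differentiable_on f E /\
  forall u v, E u -> E v -> `|gradient iV f u - gradient iV f v| <= L * `|u - v|.

Definition finf (V : normedModType R) (f : V -> R) : R := inf (range f).

Definition PL (V : normedModType R) (iV : inner_product V) (f : V -> R)
  (E : set V) (lam : R) :=
  0 < lam /\ has_lbound (range f) /\ differentiable_on f E /\
  forall u, E u -> 2^-1 * `|gradient iV f u| ^+ 2 >= lam * (f u - finf f).

Definition segment (V : normedModType R) (x y : V) : set V :=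
  [set (1 - t) *: x + t *: y | t in `[0, 1]%classic].

End Defs.

From HB Require Import structures.
From mathcomp Require Import all_boot all_order all_algebra.
From mathcomp Require Import all_classical all_reals all_analysis.
From mathcomp Require Import ring lra.
Import Order.TTheory GRing.Theory Num.Theory.
Import numFieldNormedType.Exports.
Local Open Scope classical_set_scope.
Local Open Scope ring_scope.
Set Implicit Arguments.
Unset Strict Implicit.
Unset Printing Implicit Defensive.

(* Along the segment from x to x^alpha = x + d, the directional derivative of
   f o F grows at most like L |d|^2 t: split it as <grad f, dF d> and use BJ and
   LG (with a mean value bound on F) for the change of grad f, LJ and |grad f(F x)|
   <= Kf for the change of dF. Integrating gives the descent inequality
   (f o F)(x^alpha) <= (f o F)(x) - (alpha - L alpha^2 / 2) |grad (f o F)(x)|^2.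
   By the chain rule grad (f o F)(x) = dF(x)^* y with y = grad f(F x), whose
   squared norm is <y, dF dF^* y> >= lamF |y|^2 >= 2 lamF lamf ((f o F)(x) - f_* )
   by UC and PL; substituting yields the factor q. *)

Section InnerProduct.
Variables (R : realType) (V : normedModType R) (i : inner_product V).

Definition ipl (w : V) : {linear V -> R} :=
  HB.pack (fun u => i u w) (GRing.isLinear.Build _ _ _ _ _ (fun a u v => ip_linl i a u v w)).

Lemma ip0l w : i 0 w = 0. Proof. exact: (linear0 (ipl w)). Qed.
Lemma ipBl u v w : i (u - v) w = i u w - i v w. Proof. exact: (linearB (ipl w)). Qed.
Lemma ipNl u w : i (- u) w = - i u w. Proof. exact: (linearN (ipl w)). Qed.
Lemma ip0r w : i w 0 = 0. Proof. by rewrite ip_sym ip0l. Qed.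
Lemma ipZr a u w : i w (a *: u) = a * i w u.
Proof. by rewrite ip_sym -[a *: u]addr0 ip_linl ip0l addr0 ip_sym. Qed.
Lemma ipNr u w : i w (- u) = - i w u.
Proof. by rewrite ip_sym ipNl ip_sym. Qed.
Lemma ipBr u v w : i w (u - v) = i w u - i w v.
Proof. by rewrite ip_sym ipBl !(ip_sym _ w). Qed.

Lemma ip_cauchy_schwarz u v : `|i u v| <= `|u| * `|v|.
Proof.
have [->|vn0] := eqVneq v 0; first by rewrite ip0r !normr0 mulr0.
rewrite -ler_sqr ?nnegrE ?mulr_ge0 // -normrX ger0_norm ?sqr_ge0 //.
pose w := `|v| ^+ 2 *: u - i u v *: v.
have : 0 <= i w w by rewrite ip_norm sqr_ge0.
rewrite !(ipBl, ipBr, ipZr) !(ip_sym i (_ *: _)) !ipZr !ip_norm (ip_sym i v u).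
have vpos : 0 < `|v| ^+ 2 by rewrite exprn_gt0 // normr_gt0.
set p := i u v; rewrite exprMn; nra.
Qed.

Lemma ip_representer_unique a b : (forall h, i a h = i b h) -> a = b.
Proof.
move=> ab; apply/eqP; rewrite -subr_eq0 -normr_eq0 -sqrf_eq0 -(ip_norm i).
by rewrite ipBl !ab subrr.
Qed.

Lemma ipl_continuous w : continuous (ipl w).
Proof.
apply: bounded_linear_continuous; apply/linear_boundedP.
near=> r; have wr : `|w| <= r by near: r; apply: nbhs_pinfty_ge; rewrite num_real.
move=> u; rewrite /= mulrC; apply: le_trans (ip_cauchy_schwarz u w) _.
by rewrite ler_wpM2l.
Unshelve. all: by end_near. Qed.

Lemma differentiable_ipl (G : normedModType R) (F : G -> V) z w :
  differentiable F z ->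
  differentiable (fun u => i (F u) w) z /\
  forall v, 'd (fun u => i (F u) w) z v = i ('d F z v) w.
Proof.
move=> dF; have dl := linear_differentiable (F z) (@ipl_continuous w).
change (fun u => i (F u) w) with (ipl w \o F); split; first exact: differentiable_comp.
by move=> v; rewrite diff_comp // (diff_lin (F z) (@ipl_continuous w)).
Qed.

End InnerProduct.

Section Calculus.
Variables (R : realType) (V : normedModType R).

Lemma diff_ge0_at_min (f : V -> R) u h :
  differentiable f u -> (forall v, f u <= f v) -> 0 <= 'd f u h.
Proof.
move=> df umin; have dfh : derivable f u h := diff_derivable df.
rewrite -deriveE // /derive (cvg_at_rightE _ _ dfh); apply: limr_ge.
  rewrite -(cvg_at_rightE _ _ dfh); apply: cvg_trans dfh; apply: cvg_app => A [e e0 Ae].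
  by exists e => // s se s0; apply: Ae => //; exact: lt0r_neq0.
near=> s; apply: mulr_ge0; last by rewrite subr_ge0; apply: umin.
by rewrite invr_ge0; apply: ltW; near: s; exists 1 => //=.
Unshelve. all: by end_near. Qed.

Lemma diff_eq0_at_min (f : V -> R) u :
  differentiable f u -> (forall v, f u <= f v) -> forall h, 'd f u h = 0.
Proof.
move=> df umin h; apply/eqP; rewrite eq_le diff_ge0_at_min // andbT.
by rewrite -oppr_ge0 -linearN diff_ge0_at_min.
Qed.

Lemma is_derive_line (g : V -> R) x d t :
  differentiable g (x + t *: d) ->
  is_derive t 1 (fun s => g (x + s *: d)) ('d g (x + t *: d) d).
Proof.
move=> dg.
pose p : R -> V := cst x + ( *:%R^~ d).
have dp : is_diff t p (0 + ( *:%R^~ d)) by exact: is_diffD.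
have dgp : differentiable (g \o p) t by exact: differentiable_comp.
apply: DeriveDef; first exact: diff_derivable.
by rewrite deriveE // diff_comp // diff_val /= add0r scale1r.
Qed.

Lemma descent_lemma (h : V -> R) x d M :
  (forall t, 0 <= t <= 1 -> differentiable h (x + t *: d)) ->
  (forall t, 0 < t < 1 -> 'd h (x + t *: d) d - 'd h x d <= M * t) ->
  h (x + d) <= h x + 'd h x d + M / 2.
Proof.
move=> hd hM; set c := 'd h x d.
pose psi := (fun s : R => h (x + s *: d)) - (c \*: id + (M / 2) \*: id ^+ 2 : R -> R).
have dpsi (s : R) : 0 <= s <= 1 -> is_derive s 1 psi ('d h (x + s *: d) d - (c + M * s)).
  move=> /hd /is_derive_line dh; apply: is_derive_eq.
  by rewrite expr1 /GRing.scale /=; field.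
have : psi 1 <= psi 0.
  apply: (@ler0_derive1_le_cc _ psi 0 1); rewrite ?bound_itvE //.
  - by move=> s; rewrite in_itv /= => /andP[s0 s1]; have [] := dpsi s _; rewrite ?ltW.
  - move=> s; rewrite in_itv /= => /andP[s0 s1].
    have s01 : 0 <= s <= 1 by rewrite !ltW.
    have dps := dpsi s s01; rewrite derive1E derive_val.
    by have := hM s; rewrite s0 s1 -/c => /(_ isT); lra.
  - apply: derivable_within_continuous => s; rewrite in_itv /= => s01.
    by have [] := dpsi s s01.
rewrite /psi !fctE /= scale1r scale0r addr0 expr1n expr0n /GRing.scale /=.
lra.
Qed.

End Calculus.

Lemma norm_increment_le (R : realType) (V W : normedModType R)
    (iW : inner_product W) (F : V -> W) x d K t :
  0 <= t ->
  (forall s, 0 <= s <= t -> differentiable F (x + s *: d)) ->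
  (forall s, 0 <= s <= t -> `|'d F (x + s *: d) d| <= K * `|d|) ->
  `|F (x + t *: d) - F x| <= K * t * `|d|.
Proof.
(* Mean value theorem for s |-> <F (x + s d), e>, with e the increment itself. *)
move=> t0 dF bF; set e := F (x + t *: d) - F x.
pose phi (s : R) := iW (F (x + s *: d)) e.
have dphi (s : R) : 0 <= s <= t -> is_derive s 1 phi (iW ('d F (x + s *: d) d) e).
  move=> /dF dFs; have [dg <-] := differentiable_ipl iW e dFs.
  exact: is_derive_line.
have [c /[!in_itv] /= /andP[c0 ct] phiE] :
    exists2 c, c \in `[0, t] & phi t - phi 0 = iW ('d F (x + c *: d) d) e * (t - 0).
  apply: MVT_segment => //.
    by move=> s /[!in_itv] /= /andP[s0 st]; apply: dphi; rewrite !ltW.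
  apply: derivable_within_continuous => s /[!in_itv] s0t.
  by have [] := dphi s s0t.
have ee : `|e| ^+ 2 <= K * `|d| * `|e| * t.
  move: phiE; rewrite /phi scale0r addr0 -ipBl -/e ip_norm subr0 => ->.
  rewrite ler_wpM2r //; apply: le_trans (ler_norm _) _.
  apply: le_trans (ip_cauchy_schwarz iW _ _) _.
  by rewrite ler_wpM2r // bF ?c0.
have Kd : 0 <= K * t * `|d|.
  by rewrite mulrAC mulr_ge0 // (le_trans _ (bF 0 _)) ?lexx.
by nra.
Qed.

Section GradientAdjoint.
Variables (R : realType) (G H : normedModType R).
Variables (iG : inner_product G) (iH : inner_product H).

Lemma gradient_eq (f : G -> R) u g :
  (forall h, 'd f u h = iG g h) -> gradient iG f u = g.
Proof.
move=> fg; rewrite /gradient; case: xgetP => [g' _ g'E|/(_ g fg) []].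
by apply: (ip_representer_unique (i := iG)) => h; rewrite -g'E fg.
Qed.

(* No Riesz representation is needed: if 'd f u had no representer, [gradient]
   would be the junk value 0, and then PL makes u a global minimiser, where
   'd f u = 0 is represented by 0 after all. *)
Lemma PL_gradientP (f : G -> R) E lam u :
  PL iG f E lam -> E u -> forall h, 'd f u h = iG (gradient iG f u) h.
Proof.
move=> [lam0 [fbound [df PLf]]] Eu.
have [[g gE]|no_g] := pselect (exists g, forall h, 'd f u h = iG g h).
  by move=> h; rewrite (gradient_eq gE).
have g0 : gradient iG f u = 0 by apply: xgetPN => g gE; apply: no_g; exists g.
have umin v : f u <= f v.
  have := PLf u Eu; rewrite g0 normr0 expr0n /= mulr0 pmulr_rle0 // subr_le0.
  by move/le_trans; apply; apply: (ge_inf fbound); exact: imageT.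
by move=> h; rewrite g0 ip0l diff_eq0_at_min //; exact: df.
Qed.

(* Similarly, a missing adjoint vector gives the junk value 0, which UC allows
   only for y = 0, where 0 is the adjoint vector. *)
Lemma UC_adjointP (F : G -> H) D lam x : UC iG iH F D lam -> D x ->
  forall y u, iH ('d F x u) y = iG u (adjoint iG iH ('d F x) y).
Proof.
move=> [lam0 [_ uc]] Dx y.
have [[z zE]|no_z] := pselect (exists z, forall u, iH ('d F x u) y = iG u z).
  by move=> u; rewrite /adjoint; case: xgetP => [w _ wE|/(_ z zE) []]; exact: wE.
have A0 : adjoint iG iH ('d F x) y = 0 by apply: xgetPN => z zE; apply: no_z; exists z.
have y0 : y = 0.
  apply/eqP; rewrite -normr_eq0 -sqrf_eq0 eq_le sqr_ge0 andbT -(pmulr_rle0 _ lam0).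
  by have := uc x Dx y; rewrite A0 linear0 ip0r.
by move=> u; rewrite A0 y0 !ip0r.
Qed.

Lemma UC_norm_adjoint_ge (F : G -> H) D lam x : UC iG iH F D lam -> D x ->
  forall y, lam * `|y| ^+ 2 <= `|adjoint iG iH ('d F x) y| ^+ 2.
Proof.
move=> ucF Dx y; have [_ [_ uc]] := ucF.
by rewrite -(ip_norm iG) -(UC_adjointP ucF Dx) ip_sym; exact: uc.
Qed.

Lemma diff_comp_adjoint (F : G -> H) (f : H -> R) x :
  differentiable F x -> differentiable f (F x) ->
  (forall h, 'd f (F x) h = iH (gradient iH f (F x)) h) ->
  (forall u, iH ('d F x u) (gradient iH f (F x)) =
             iG u (adjoint iG iH ('d F x) (gradient iH f (F x)))) ->
  forall h, 'd (f \o F) x h = iG (adjoint iG iH ('d F x) (gradient iH f (F x))) h.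
Proof.
by move=> dF df fgrad Fadj h; rewrite diff_comp //= fgrad ip_sym Fadj ip_sym.
Qed.

End GradientAdjoint.

Lemma diff_comp_increment_le (R : realType) (G H : normedModType R)
    (iH : inner_product H) (F : G -> H) (f : H -> R) (D : set G)
    (KF LF Lf Kf : R) x d t :
  BJ F D KF -> LJ F D LF -> LG iH f (F @` D) Lf ->
  (forall u, (F @` D) u -> forall h, 'd f u h = iH (gradient iH f u) h) ->
  0 <= Lf -> `|gradient iH f (F x)| <= Kf ->
  0 <= t -> (forall s, 0 <= s <= t -> D (x + s *: d)) ->
  'd (f \o F) (x + t *: d) d - 'd (f \o F) x d <=
    (KF ^+ 2 * Lf + Kf * LF) * t * `|d| ^+ 2.
Proof.
move=> [dF bJ] [_ lJ] [df lg] fgrad Lf0 yK t0 Dseg.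
have FD u : D u -> (F @` D) (F u) by exists u.
have Dx : D x by have := Dseg 0; rewrite scale0r addr0 lexx t0; apply.
have Dt : D (x + t *: d) by apply: Dseg; rewrite lexx t0.
rewrite (diff_comp (dF _ Dt) (df _ (FD _ Dt))) (diff_comp (dF _ Dx) (df _ (FD _ Dx))) /=.
rewrite (fgrad _ (FD _ Dt)) (fgrad _ (FD _ Dx)).
set xt := x + t *: d; set y := gradient iH f (F x); set yt := gradient iH f (F xt).
have Fxt : `|F xt - F x| <= KF * t * `|d|.
  apply: (norm_increment_le iH) => // s st; first exact/dF/Dseg.
  exact/bJ/Dseg.
have dxt : `|xt - x| = t * `|d| by rewrite addrC addKr normrZ ger0_norm.
have -> : iH yt ('d F xt d) - iH y ('d F x d) =
    iH (yt - y) ('d F xt d) + iH y ('d F xt d - 'd F x d).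
  by rewrite ipBl ipBr addrA subrK.
rewrite !mulrDl; apply: lerD.
- apply: le_trans (ler_norm _) _; apply: le_trans (ip_cauchy_schwarz iH _ _) _.
  have ly := le_trans (lg _ _ (FD _ Dt) (FD _ Dx)) (ler_wpM2l Lf0 Fxt).
  apply: le_trans (ler_pM (normr_ge0 _) (normr_ge0 _) ly (bJ _ Dt d)) _.
  lra.
- apply: le_trans (ler_norm _) _; apply: le_trans (ip_cauchy_schwarz iH _ _) _.
  have lA := lJ _ _ Dt Dx d; rewrite /= dxt in lA.
  apply: le_trans (ler_pM (normr_ge0 _) (normr_ge0 _) yK lA) _.
  lra.
Qed.

Lemma descent_contraction (R : realFieldType) (L lam alpha P P' N : R) :
  0 < L -> 0 < alpha -> alpha < 2 / L -> 2 * lam * P <= N ->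
  P' <= P - (alpha - L / 2 * alpha ^+ 2) * N ->
  P' <= (1 + L * alpha ^+ 2 * lam - 2 * alpha * lam) * P.
Proof.
move=> L0 a0; rewrite ltr_pdivlMr // => aL PN P'N.
have c0 : 0 <= alpha - L / 2 * alpha ^+ 2 by nra.
apply: le_trans P'N _; have := ler_wpM2l c0 PN; lra.
Qed.

Theorem proposition10 (R : realType) (G H : completeNormedModType R)
  (iG : inner_product G) (iH : inner_product H)
  (D : set G) (x : G) (KF LF lamF Lf lamf Kf : R)
  (F : G -> H) (f : H -> R) (alpha : R) :
  bounded_set D -> D x ->
  0 <= KF -> 0 <= LF -> 0 <= lamF -> 0 <= Lf -> 0 <= lamf -> 0 <= Kf ->
  lamF <= KF ^+ 2 -> lamf <= Lf ->
  BJ F D KF -> LJ F D LF -> UC iG iH F D lamF ->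
  LG iH f (F @` D) Lf -> PL iH f (F @` D) lamf ->
  `|gradient iH f (F x)| <= Kf ->
  let L := KF ^+ 2 * Lf + Kf * LF in
  let lam := lamF * lamf in
  0 < alpha -> alpha < 2 / L ->
  let q := 1 + L * alpha ^+ 2 * lam - 2 * alpha * lam in
  let xa := x - alpha *: gradient iG (f \o F) x in
  segment x xa `<=` D ->
  (f \o F) xa - finf f <= q * ((f \o F) x - finf f).
Proof.
move=> _ Dx _ LF0 lamF0 Lf0 _ Kf0 lamFK lamfL BJF LJF UCF LGf PLf yK L lam a0 aL q xa seg.
have fgrad := PL_gradientP PLf.
have FD u : D u -> (F @` D) (F u) by exists u.
set y := gradient iH f (F x); set g := gradient iG (f \o F) x; set d := - (alpha *: g).
have Dseg s : 0 <= s <= 1 -> D (x + s *: d).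
  move=> s01; apply: seg; exists s; first by rewrite /= in_itv.
  by rewrite /xa scalerBl scale1r scalerDr addrA subrK.
have dfF := diff_comp_adjoint (BJF.1 _ Dx) (LGf.1 _ (FD _ Dx)) (fgrad _ (FD _ Dx))
  (UC_adjointP UCF Dx y).
have gE : g = adjoint iG iH ('d F x) y := gradient_eq dfF.
have desc : (f \o F) (x + d) <= (f \o F) x + 'd (f \o F) x d + L * `|d| ^+ 2 / 2.
  apply: descent_lemma => t /andP[t0 t1].
    have Dt : D (x + t *: d) by apply: Dseg; rewrite t0.
    exact: differentiable_comp (BJF.1 _ Dt) (LGf.1 _ (FD _ Dt)).
  rewrite mulrAC; apply: (diff_comp_increment_le BJF LJF LGf fgrad Lf0 yK (ltW t0)).
  by move=> s /andP[s0 st]; apply: Dseg; rewrite s0 (le_trans st (ltW t1)).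
have N : 2 * lam * ((f \o F) x - finf f) <= `|g| ^+ 2.
  rewrite gE; apply: le_trans (UC_norm_adjoint_ge UCF Dx y).
  have := PLf.2.2.2 _ (FD _ Dx); rewrite -/y /lam /=; nra.
have L0 : 0 < L.
  have := UCF.1; have := PLf.1; rewrite /L; nra.
apply: (descent_contraction L0 a0 aL N).
move: desc; rewrite dfF -gE /d ipNr ipZr ip_norm normrN normrZ (gtr0_norm a0).
rewrite /= -/xa; lra.
Qed.
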